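(* Let $n\ge 4$ and let $k$ be a positive integer. Then $|U(n,2)|=\frac12 C_{4k}^{2k}C_{4k^2}^{k}$ if $n=4k$; $|U(n,2)|=C_{4k+1}^{2k}C_{4k^2+2k}^{k}$ if $n=4k+1$; and $|U(n,2)|=0$ if $n$ is not of the form $4k$ or $4k+1$.
   Context: Let $S=K[x_1,\ldots,x_n]$ over a field $K$; $C_a^b$ is the binomial coefficient; $sm(S)_d$ is the set of square-free monomials of degree $d$. For a set $A$ of square-free monomials, $\sqcup(A)=\{gx_i\mid g\in A,\ x_i\nmid g\}$, $\sqcap(A)=\{h\ne1\mid h=g/x_i,\ g\in A,\ x_i\mid g\}$; $A\subseteq sm(S)_d$ is $(n,d)^{th}$ perfect if $\sqcup(A)=sm(S)_{d+1}$ and $\sqcap(A)=sm(S)_{d-1}$; $N_{(n,d)}$ is the least cardinality of an $(n,d)^{th}$ perfect set. With $\sigma$ the bijection from square-free monomials to subsets of $[n]$, the facet complex $\delta_{\mathcal{F}}(I)$ of a square-free monomial ideal $I$ has facets $\sigma(g)$, $g\in G(I)$ (the minimal generating set), the Stanley–Reisner complex is $\delta_{\mathcal{N}}(I)=\{\sigma(g)\mid g\notin I\}$, and $I$ is an $f$-ideal if both complexes have the same $f$-vector. An ideal is of degree $d$ if all elements of $G(I)$ have degree $d$. $U(n,2)$ is the set of $f$-ideals $I$ of $S$ of degree $2$ such that $G(I)$ contains an $(n,2)^{th}$ perfect set of cardinality $N_{(n,2)}$. *)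

(* Square-free monomials of K[x_1..x_n] are identified with
   subsets of 'I_n (the bijection sigma); a square-free monomial ideal I is
   represented by its minimal generating set G(I) : {set {set 'I_n}}. *)
From mathcomp Require Import all_boot all_order.
Set Implicit Arguments. Unset Strict Implicit. Unset Printing Implicit Defensive.

Section SqFree.
Variable n : nat.
Local Notation mono := {set 'I_n}.

Definition sm (d : nat) : {set mono} := [set g : mono | #|g| == d].

Definition sqcup (A : {set mono}) : {set mono} :=
  [set h : mono | [exists g in A, exists i, (i \notin g) && (h == i |: g)]].

Definition sqcap (A : {set mono}) : {set mono} :=
  [set h : mono | (h != set0) && [exists g in A, exists i in g, h == g :\ i]].

Definition perfect (d : nat) (A : {set mono}) : bool :=
  [&& A \subset sm d, sqcup A == sm d.+1 & sqcap A == sm d.-1].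

(* N_(n,d): least cardinality of an (n,d)-th perfect set
   (default value (2^n).+1 exceeds every possible cardinality) *)
Definition Nperf (d : nat) : nat :=
  \big[minn/(2 ^ n).+1]_(A : {set mono} | perfect d A) #|A|.

Definition inI (G : {set mono}) (g : mono) : bool :=
  [exists h in G, h \subset g].

Definition facet_cx (G : {set mono}) : {set mono} :=
  [set F : mono | [exists g in G, F \subset g]].

Definition sr_cx (G : {set mono}) : {set mono} :=
  [set F : mono | ~~ inI G F].

(* f_(i-1) of a complex: number of faces with i vertices *)
Definition fnum (C : {set mono}) (i : nat) : nat := #|[set F in C | #|F| == i]|.

(* (faces have at most n vertices, so sizes i <= n cover the whole f-vector) *)
Definition f_ideal (G : {set mono}) : bool :=
  [forall i : 'I_n.+1, fnum (facet_cx G) i == fnum (sr_cx G) i].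

(* U(n,2), as the set of minimal generating sets G(I) *)
Definition U2 : {set {set mono}} :=
  [set G : {set mono} | [&& G \subset sm 2,
     f_ideal G &
     [exists A : {set mono}, [&& A \subset G, perfect 2 A & #|A| == Nperf 2]]]].
End SqFree.

(* A set A of square-free quadrics is (n,2)-perfect iff every triple of variables
   contains a member of A and every variable divides one.  The first condition says
   that the complementary graph sm_2 \ A is triangle-free, so by Mantel's theorem it
   has at most m(n - m) edges, m = n/2 rounded down, with equality only for complete
   bipartite graphs K_(m, n - m).  Hence N_(n,2) = C(n,2) - m(n - m), and the minimal
   perfect sets are the complements of the cuts (S, ~ S) with |S| = m.  For G
   containing such a set the facet and Stanley-Reisner complexes have the same faces
   outside dimension 1, so G is an f-ideal iff |G| = C(n,2)/2: impossible unless
   n = 4k or 4k + 1, and then G is the complement of the cut plus k = m(n - m) -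
   C(n,2)/2 of its edges.  So few cut edges determine S up to complementation
   (and ~ S also has size m only when n = 4k), so counting pairs (S, G) gives the
   formula. *)

From mathcomp Require Import all_boot all_order zify.
Set Implicit Arguments. Unset Strict Implicit. Unset Printing Implicit Defensive.

Lemma geq_bigminn_cond (I : finType) (P : pred I) (F : I -> nat) x0 j :
  P j -> \big[minn/x0]_(i | P i) F i <= F j.
Proof.
move=> Pj; rewrite unlock; have : j \in index_enum I by rewrite mem_index_enum.
elim: (index_enum I) => //= i r IHr; rewrite inE => /orP[/eqP <-|jr].
  by rewrite Pj geq_minl.
by case: (P i); rewrite ?geq_min IHr ?orbT.
Qed.

Lemma mul2_bin2 n : 2 * 'C(n, 2) = n * n.-1.
Proof.
by elim: n => // n IHn; rewrite binS bin1 mulnDr IHn; case: n {IHn} => //= n; nia.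
Qed.

Lemma half_bin2_mod4 n x : 2 * x = 'C(n, 2) -> n %% 4 < 2.
Proof.
move=> h; have := mul2_bin2 n; rewrite -h (divn_eq n 4).
have : n %% 4 < 4 by rewrite ltn_mod.
nia.
Qed.

Lemma leq_mul_balanced a b m : a + b = m + m \/ a + b = m + m + 1 ->
  a * b <= m * (a + b - m) /\ (a * b = m * (a + b - m) -> a = m \/ b = m).
Proof.
wlog le_ab : a b / a <= b.
  move=> W h; have [le_ab|/ltnW le_ba] := leqP a b; first exact: W le_ab h.
  have := W b a le_ba; rewrite addnC mulnC => /(_ h)[? eq_ba].
  by split=> // /eq_ba[]; auto.
have [t ->] : exists t, b = a + t by exists (b - a); lia.
case=> e; rewrite e;
  [have -> : m + m - m = m by lia | have -> : m + m + 1 - m = m + 1 by lia];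
  have := congr1 (fun x => x * x) e => /= sq; split; nia.
Qed.

(* a, b, c, d are the sizes of the quadrants T :&: S, T :\: S, ~: T :&: S, ~: T :\: S
   of two 2k-sets S, T in a ground set of size 2k or 2k + 1. *)
Lemma quadrant_products_small k a b c d : 0 < k ->
  a + b = k + k -> a + c = k + k -> (c + d = k + k \/ c + d = k + k + 1) ->
  a * b + c * d <= k -> b = 0 \/ (a = 0 /\ d = 0).
Proof.
move=> k_gt0 e1 e2 e3 h.
have bc : b = c by lia.
rewrite -bc in h e3.
have [->|b_gt0] := posnP b; first by left.
have [b_lt|b_ge] := leqP b (k + k - 1); last by right; case: e3 => e3; nia.
exfalso; have [t bt] : exists t, b = t.+1 by exists b.-1; lia.
by rewrite bt in h e1 e3 b_lt; case: e3 => e3; nia.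
Qed.

Lemma card_set_sum (T : finType) (X : {set T}) (P : pred T) :
  #|[set x in X | P x]| = \sum_(x in X) P x.
Proof.
rewrite -sum1_card (eq_bigl (fun x => (x \in X) && P x)) => [|x]; last by rewrite inE.
by rewrite big_mkcondr /=; apply: eq_bigr => x _; case: (P x).
Qed.

Lemma card_sum_mem (T : finType) (A : {set T}) : #|A| = \sum_x (x \in A).
Proof. by rewrite -sum1_card big_mkcond /=; apply: eq_bigr => x _; case: (x \in A). Qed.

Lemma card_setI_sum (T : finType) (X Y : {set T}) :
  #|X :&: Y| = \sum_(y in Y) (y \in X).
Proof. by rewrite -card_set_sum; apply: eq_card => y; rewrite !inE andbC. Qed.

Lemma setDDK (T : finType) (A B : {set T}) : B \subset A -> A :\: (A :\: B) = B.
Proof. by move=> sBA; rewrite setDDr setDv set0U; apply/setIidPr. Qed.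

Lemma disjoint_setI_setD (T : finType) (A B : {set T}) : [disjoint A :&: B & A :\: B].
Proof. by rewrite disjoints_subset; apply/subsetP=> x; rewrite !inE => /andP[_ ->]. Qed.

Lemma cards2_mem (T : finType) (e : {set T}) w : #|e| = 2 -> w \in e ->
  exists2 u, u != w & e = [set u; w].
Proof.
move=> /eqP/cards2P[a [b [ab ->]]]; rewrite in_set2 => /orP[]/eqP->.
  by exists b; rewrite 1?eq_sym // setUC.
by exists a.
Qed.

Lemma cards3 (T : finType) (x y z : T) : x != y -> x != z -> y != z ->
  #|[set x; y; z]| = 3.
Proof.
move=> xy xz yz; rewrite setUC cardsU1 cards2 xy !inE.
by rewrite eq_sym (negbTE xz) eq_sym (negbTE yz).
Qed.

Lemma subset3_cards2 (T : finType) (g : {set T}) x y z :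
  g \subset [set x; y; z] -> #|g| = 2 ->
  [\/ g = [set x; y], g = [set x; z] | g = [set y; z]].
Proof.
move=> sg /eqP/cards2P[a [b [ab eg]]]; subst g.
have mem3 u : u \in [set a; b] -> [\/ u = x, u = y | u = z].
  by move=> /(subsetP sg); rewrite !inE => /orP[/orP[]|] /eqP ->;
    [constructor 1 | constructor 2 | constructor 3].
have /mem3 ha : a \in [set a; b] by rewrite !inE eqxx.
have /mem3 hb : b \in [set a; b] by rewrite !inE eqxx orbT.
move: ab; case: ha => ->; case: hb => ->; rewrite ?eqxx // => _.
- by constructor 1.
- by constructor 2.
- by constructor 1; rewrite setUC.
- by constructor 3.
- by constructor 2; rewrite setUC.
- by constructor 3; rewrite setUC.
Qed.

Section SquareFree.
Variable n : nat.
Local Notation vertex := 'I_n.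
Local Notation mono := {set 'I_n}.

Lemma in_sm d (g : mono) : (g \in sm n d) = (#|g| == d).
Proof. by rewrite inE. Qed.

Lemma card_sm d (g : mono) : g \in sm n d -> #|g| = d.
Proof. by rewrite in_sm => /eqP. Qed.

Lemma card_sm2 : #|sm n 2| = 'C(n, 2).
Proof. by rewrite /sm card_draws card_ord. Qed.

Lemma cardsC_ord (S : mono) : #|~: S| = n - #|S|.
Proof. by rewrite cardsCs setCK card_ord. Qed.

Definition cross (X Y : mono) : {set mono} := [set [set p.1; p.2] | p in setX X Y].

Definition uncut (S : mono) : {set mono} :=
  [set e in sm n 2 | (e \subset S) || (e \subset ~: S)].

Lemma crossP (X Y : mono) e :
  reflect (exists x y, [/\ x \in X, y \in Y & e = [set x; y]]) (e \in cross X Y).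
Proof.
apply: (iffP imsetP) => [[[x y]]|[x [y [xX yY ->]]]]; last by exists (x, y); rewrite ?inE ?xX.
by rewrite inE /= => /andP[xX yY] ->; exists x, y.
Qed.

Lemma crossC (X Y : mono) : cross X Y = cross Y X.
Proof.
by apply/setP=> e; apply/crossP/crossP=> -[x [y [xX yY ->]]]; exists y, x; rewrite setUC.
Qed.

Lemma card_cross (X Y : mono) : [disjoint X & Y] -> #|cross X Y| = #|X| * #|Y|.
Proof.
move=> dXY; rewrite card_in_imset ?cardsX // => -[x1 y1] [x2 y2].
rewrite !inE /= => /andP[x1X y1Y] /andP[x2X y2Y] e.
have neqXY x y : x \in X -> y \in Y -> (x == y) = false.
  by move=> xX yY; apply: (contraTF _ dXY) => /eqP exy; apply/pred0Pn; exists x; rewrite /= xX exy.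
have : x1 \in [set x2; y2] by rewrite -e !inE eqxx.
rewrite !inE (neqXY x1 y2) // orbF => /eqP ex; subst x2.
have : y1 \in [set x1; y2] by rewrite -e !inE eqxx orbT.
by rewrite !inE eq_sym (neqXY x1 y1) // => /eqP ->.
Qed.

Lemma uncut_sub (S : mono) : uncut S \subset sm n 2.
Proof. by apply/subsetP=> e; rewrite inE => /andP[]. Qed.

Lemma uncutC (S : mono) : uncut (~: S) = uncut S.
Proof. by apply/setP=> e; rewrite !inE setCK orbC. Qed.

Lemma sm2_diff_uncut (S : mono) : sm n 2 :\: uncut S = cross S (~: S).
Proof.
apply/setP=> e; rewrite !inE; apply/idP/crossP.
  case/andP=> + e2; rewrite e2 /=.
  case/cards2P: e2 => a [b [ab ->]] /norP[neS neC].
  have [aS|aS] := boolP (a \in S).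
    have bS : b \notin S by apply: (contra _ neS) => bS; rewrite subUset !sub1set aS.
    by exists a, b; rewrite inE.
  have bS : b \in S by apply: (contraR _ neC) => bS; rewrite subUset !sub1set !inE aS.
  by exists b, a; rewrite inE setUC.
case=> x [y [xS]]; rewrite inE => yS ->.
have xy : x != y by apply: (contraNneq _ yS) => <-.
by rewrite cards2 xy !subUset !sub1set !inE xS (negbTE yS).
Qed.

Lemma disjoint_uncut_cross (S : mono) : [disjoint uncut S & cross S (~: S)].
Proof. by rewrite -sm2_diff_uncut disjoints_subset setCD subsetUr. Qed.

Lemma cross_quadrant_sub (S U : mono) :
  cross (U :&: S) (U :\: S) \subset uncut U :&: cross S (~: S).
Proof.
apply/subsetP=> e /crossP[x [y [xUS yUS ->]]]; move: xUS yUS.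
rewrite !inE => /andP[xU xS] /andP[yS yU].
have xy : x != y by apply: (contraNneq _ yS) => <-.
rewrite cards2 xy subUset !sub1set xU yU /=; apply/crossP.
by exists x, y; rewrite inE.
Qed.

Lemma card_uncut (S : mono) : #|uncut S| + #|S| * (n - #|S|) = 'C(n, 2).
Proof.
rewrite -cardsC_ord -card_cross; last by rewrite -setI_eq0 setICr.
rewrite -sm2_diff_uncut -card_sm2.
by rewrite -(cardsID (uncut S) (sm n 2)) (setIidPr (uncut_sub S)).
Qed.

Section Mantel.
Variable H : {set mono}.
Hypothesis H_sub : H \subset sm n 2.
Hypothesis H_triangle_free :
  forall x y z, [set x; y] \in H -> [set y; z] \in H -> [set x; z] \notin H.

Let nbhd (w : vertex) : mono := [set u | [set u; w] \in H].

Lemma notin_nbhd w : w \notin nbhd w.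
Proof.
by rewrite inE setUid; apply/negP => /(subsetP H_sub); rewrite in_sm cards1.
Qed.

Lemma card_edges_at w : #|[set e in H | w \in e]| = #|nbhd w|.
Proof.
have -> : [set e in H | w \in e] = [set [set u; w] | u in nbhd w].
  apply/setP=> e; rewrite inE; apply/andP/imsetP => [[eH we]|[u]].
    have [u _ ee] := cards2_mem (card_sm (subsetP H_sub e eH)) we.
    by exists u; rewrite // inE -ee.
  by rewrite inE => uH ->; rewrite !inE eqxx orbT.
rewrite card_in_imset // => u1 u2 h1 h2 e.
have : u1 \in [set u2; w] by rewrite -e !inE eqxx.
rewrite !inE => /orP[/eqP //|/eqP ew]; subst u1.
by rewrite (negbTE (notin_nbhd w)) in h1.
Qed.

Lemma sum_card_edgesI (W : mono) :
  \sum_(e in H) #|e :&: W| = \sum_(w in W) #|nbhd w|.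
Proof.
under eq_bigr => e _ do rewrite card_setI_sum.
by rewrite exchange_big; apply: eq_bigr => w _; rewrite -card_edges_at card_set_sum.
Qed.

(* An edge inside the neighbourhood of v would close a triangle through v. *)
Lemma edge_meets_compl_nbhd v e : e \in H -> 0 < #|e :&: ~: nbhd v|.
Proof.
move=> eH; move: (subsetP H_sub e eH); rewrite in_sm => /cards2P[x [y [_ ee]]].
apply/card_gt0P; have [xN|xN] := boolP (x \in nbhd v); last first.
  by exists x; rewrite in_setI in_setC xN ee in_set2 eqxx.
exists y; rewrite in_setI ee in_set2 eqxx orbT in_setC; apply: (contraL _ eH) => yN.
rewrite inE in xN; rewrite inE setUC in yN.
by rewrite ee; apply: H_triangle_free xN yN.
Qed.

Lemma card_le_sum_meet_compl_nbhd v : #|H| <= \sum_(e in H) #|e :&: ~: nbhd v|.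
Proof. by rewrite -sum1_card; apply: leq_sum => e; exact: edge_meets_compl_nbhd. Qed.

Section MaxDegree.
Variable v : vertex.
Hypothesis v_max : forall w, #|nbhd w| <= #|nbhd v|.
Local Notation N := (nbhd v).
Local Notation W := (~: nbhd v).

Lemma card_edges_le_max_degree : #|H| <= #|W| * #|N|.
Proof.
apply: leq_trans (card_le_sum_meet_compl_nbhd v) _.
by rewrite sum_card_edgesI -sum_nat_const; apply: leq_sum.
Qed.

Lemma cross_max_degree : #|H| = #|W| * #|N| -> H = cross N W.
Proof.
move=> eqH.
have sum_meet : \sum_(e in H) #|e :&: W| = #|H|.
  apply/eqP; rewrite eqn_leq card_le_sum_meet_compl_nbhd andbT.
  by rewrite sum_card_edgesI eqH -sum_nat_const leq_sum.
have meet1 e : e \in H -> #|e :&: W| = 1.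
  have : \sum_(e in H) (#|e :&: W| - 1) == 0.
    by rewrite sumnB ?sum1_card ?sum_meet ?subnn // => *; exact: edge_meets_compl_nbhd.
  rewrite sum_nat_eq0 => /forallP/(_ e) + eH; rewrite eH /=.
  by rewrite subn_eq0 => le1; apply/eqP; rewrite eqn_leq le1 edge_meets_compl_nbhd.
have nbhdW w : w \in W -> nbhd w = N.
  have : \sum_(w in W) (#|N| - #|nbhd w|) == 0.
    by rewrite sumnB ?sum_nat_const -?sum_card_edgesI ?sum_meet ?eqH ?subnn.
  rewrite sum_nat_eq0 => /forallP/(_ w) + wW; rewrite wW /= subn_eq0 => le_Nw.
  apply/eqP; rewrite eqEcard le_Nw andbT; apply/subsetP=> x xNw.
  have xw : x != w by apply: contraTneq xNw => ->; exact: notin_nbhd.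
  have xwH : [set x; w] \in H by rewrite inE in xNw.
  apply/negPn/negP => xW; have := meet1 _ xwH.
  by rewrite (setIidPl _) ?cards2 ?xw // subUset !sub1set wW inE xW.
apply/setP=> e; apply/idP/crossP=> [eH|[x [w [xN wW ->]]]]; last first.
  by move: xN; rewrite -(nbhdW w wW) inE.
have /cards1P[w ew] := introT eqP (meet1 e eH).
have : w \in e :&: W by rewrite ew inE.
rewrite inE => /andP[we wW].
have [u uw ee] := cards2_mem (card_sm (subsetP H_sub e eH)) we; exists u, w; split=> //.
apply/negPn/negP => uW.
have : u \in e :&: W by rewrite in_setI in_setC uW ee in_set2 eqxx.
by rewrite ew inE (negbTE uw).
Qed.

End MaxDegree.

Lemma exists_max_degree : 0 < n -> exists v, forall w, #|nbhd w| <= #|nbhd v|.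
Proof.
move=> n_gt0; have [v _ v_max] := @arg_maxnP _ (Ordinal n_gt0) xpredT (fun w => #|nbhd w|) isT.
by exists v => w; apply: v_max.
Qed.

Variable m : nat.
Hypothesis n_gt0 : 0 < n.
Hypothesis n_half : n = m + m \/ n = m + m + 1.

Lemma le_max_degree_balanced v : #|~: nbhd v| * #|nbhd v| <= m * (n - m) /\
  (#|~: nbhd v| * #|nbhd v| = m * (n - m) -> #|~: nbhd v| = m \/ #|nbhd v| = m).
Proof.
have le_n : #|nbhd v| <= n by have := cardsC (nbhd v); rewrite card_ord; lia.
rewrite cardsC_ord; move: #|nbhd v| le_n => D le_n.
by rewrite -{2 4}(subnK le_n); apply: leq_mul_balanced; rewrite subnK.
Qed.

Lemma mantel_bound : #|H| <= m * (n - m).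
Proof.
have [v v_max] := exists_max_degree n_gt0.
exact: leq_trans (card_edges_le_max_degree v_max) (le_max_degree_balanced v).1.
Qed.

Lemma mantel_extremal : #|H| = m * (n - m) -> exists S : mono, #|S| = m /\ H = cross S (~: S).
Proof.
move=> eqH; have [v v_max] := exists_max_degree n_gt0.
have [le_m eq_m] := le_max_degree_balanced v.
have le_H := card_edges_le_max_degree v_max.
have eq_deg : #|H| = #|~: nbhd v| * #|nbhd v| by apply/eqP; rewrite eqn_leq le_H eqH le_m.
have -> := cross_max_degree v_max eq_deg.
case: (eq_m (etrans (esym eq_deg) eqH)) => <-; last by exists (nbhd v).
by exists (~: nbhd v); rewrite setCK crossC.
Qed.

End Mantel.

Section CoveringTriples.
Variable A : {set mono}.
Hypothesis A_sub : A \subset sm n 2.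
Hypothesis A_cover : forall F : mono, #|F| = 3 -> exists2 g, g \in A & g \subset F.

Lemma triangle_free_sm2_diff x y z :
  [set x; y] \in sm n 2 :\: A -> [set y; z] \in sm n 2 :\: A ->
  [set x; z] \notin sm n 2 :\: A.
Proof.
rewrite !inE => /andP[xyA /eqP xy2] /andP[yzA /eqP yz2].
apply/negP=> /andP[xzA /eqP xz2].
have neq (u w : vertex) : #|[set u; w]| = 2 -> u != w by rewrite cards2; case: (u != w).
have [g gA] := A_cover (cards3 (neq _ _ xy2) (neq _ _ xz2) (neq _ _ yz2)).
move=> /subset3_cards2/(_ (card_sm (subsetP A_sub g gA)))[] eg.
all: by move: gA; rewrite eg; apply/negP.
Qed.

Variable m : nat.
Hypothesis n_gt0 : 0 < n.
Hypothesis n_half : n = m + m \/ n = m + m + 1.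

Let card_sm2_diff : #|sm n 2 :\: A| = 'C(n, 2) - #|A|.
Proof. by rewrite cardsD (setIidPr A_sub) card_sm2. Qed.

Let sm2_diff_sub : sm n 2 :\: A \subset sm n 2.
Proof. exact: subsetDl. Qed.

Lemma covering_bound : 'C(n, 2) <= #|A| + m * (n - m).
Proof.
have := mantel_bound sm2_diff_sub triangle_free_sm2_diff n_gt0 n_half.
by rewrite card_sm2_diff; lia.
Qed.

Lemma covering_extremal : #|A| + m * (n - m) = 'C(n, 2) ->
  exists S : mono, #|S| = m /\ A = uncut S.
Proof.
move=> eqA; have [|S [hS eqS]] := mantel_extremal sm2_diff_sub triangle_free_sm2_diff n_gt0 n_half.
  by rewrite card_sm2_diff -eqA addKn.
exists S; split=> //; rewrite -sm2_diff_uncut in eqS.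
by rewrite -(setDDK A_sub) eqS setDDK ?uncut_sub.
Qed.

End CoveringTriples.

Lemma uncut_meets_large (S F : mono) : 3 <= #|F| ->
  exists2 g, g \in uncut S & g \subset F.
Proof.
move=> F_ge3; have := cardsID S F.
have [/card_gt1P[x [y [xFS yFS xy]]] _|lt_FS splitF] := leqP 2 #|F :&: S|.
  move: xFS yFS; rewrite !inE => /andP[xF xS] /andP[yF yS].
  exists [set x; y]; last by rewrite subUset !sub1set xF yF.
  by rewrite !inE cards2 xy subUset !sub1set xS yS.
have /card_gt1P[x [y [xFS yFS xy]]] : 1 < #|F :\: S| by lia.
move: xFS yFS; rewrite !inE => /andP[xS xF] /andP[yS yF].
exists [set x; y]; last by rewrite subUset !sub1set xF yF.
by rewrite !inE cards2 xy !subUset !sub1set !inE xS yS orbT.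
Qed.

Lemma uncut_covers (S : mono) : 1 < #|S| -> 1 < #|~: S| -> forall x,
  exists2 g, g \in uncut S & x \in g.
Proof.
move=> S_gt1 SC_gt1 x.
have other (P : mono) : 1 < #|P| -> x \in P -> exists2 y, y != x & y \in P.
  move=> P_gt1 xP; have : 0 < #|P :\ x| by move: P_gt1; rewrite (cardsD1 x P) xP.
  by case/card_gt0P=> y; rewrite !inE => /andP[yx yP]; exists y.
have [xS|xS] := boolP (x \in S).
  have [y yx yS] := other S S_gt1 xS.
  exists [set x; y]; last by rewrite !inE eqxx.
  by rewrite !inE cards2 (eq_sym x) yx !subUset !sub1set xS yS.
have xC : x \in ~: S by rewrite inE.
have [y yx yC] := other _ SC_gt1 xC.
exists [set x; y]; last by rewrite !inE eqxx.
by rewrite !inE cards2 (eq_sym x) yx /= !subUset !sub1set xC yC orbT.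
Qed.

Lemma sqcup_uncut (S : mono) : sqcup (uncut S) = sm n 3.
Proof.
apply/setP=> h; rewrite !inE; apply/idP/idP.
  case/existsP=> g /andP[gA /existsP[i /andP[ig /eqP ->]]].
  by rewrite cardsU1 ig (card_sm (subsetP (uncut_sub S) g gA)).
move=> /eqP h3; have [g gA gh] := uncut_meets_large S (eq_leq (esym h3)).
have g2 := card_sm (subsetP (uncut_sub S) g gA).
have /cards1P[i hi] : #|h :\: g| == 1 by rewrite cardsD (setIidPr gh) h3 g2.
have : i \in h :\: g by rewrite hi inE.
rewrite inE => /andP[ig _].
apply/existsP; exists g; rewrite gA /=; apply/existsP; exists i.
by rewrite ig /=; apply/eqP; rewrite -[h](setID h g) (setIidPr gh) hi setUC.
Qed.

Lemma sqcap_uncut (S : mono) : 1 < #|S| -> 1 < #|~: S| -> sqcap (uncut S) = sm n 1.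
Proof.
move=> S_gt1 SC_gt1; apply/setP=> h; rewrite !inE; apply/idP/idP.
  case/andP=> _ /existsP[g /andP[gA /existsP[i /andP[ig /eqP ->]]]].
  by have := cardsD1 i g; rewrite ig (card_sm (subsetP (uncut_sub S) g gA)); lia.
case/cards1P=> x ->; rewrite -cards_eq0 cards1 /=.
have [g gA xg] := uncut_covers S_gt1 SC_gt1 x.
have [y yx ge] := cards2_mem (card_sm (subsetP (uncut_sub S) g gA)) xg.
apply/existsP; exists g; rewrite gA /=; apply/existsP; exists y.
by rewrite ge setU11 setU1K ?eqxx // inE.
Qed.

Lemma perfect_uncut (S : mono) : 1 < #|S| -> 1 < #|~: S| -> perfect 2 (uncut S).
Proof.
by move=> S_gt1 SC_gt1; rewrite /perfect uncut_sub sqcup_uncut sqcap_uncut ?eqxx.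
Qed.

Lemma perfect_sub d (A : {set mono}) : perfect d A -> A \subset sm n d.
Proof. by case/and3P. Qed.

Lemma perfect_covers_triples (A : {set mono}) : perfect 2 A ->
  forall F : mono, #|F| = 3 -> exists2 g, g \in A & g \subset F.
Proof.
case/and3P=> _ /eqP A_sqcup _ F F3.
have : F \in sqcup A by rewrite A_sqcup inE F3.
rewrite inE => /existsP[g /andP[gA /existsP[i /andP[_ /eqP ->]]]].
by exists g; rewrite // subsetUr.
Qed.

Section Complexes.
Variable G : {set mono}.
Hypothesis G_sub : G \subset sm n 2.

Lemma fnum_facet_cx2 : fnum (facet_cx G) 2 = #|G|.
Proof.
apply: eq_card => F; rewrite !inE; apply/andP/idP => [[/existsP[g /andP[gG Fg]] /eqP F2]|FG].
  suff -> : F = g by [].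
  by apply/eqP; rewrite eqEcard Fg F2 (card_sm (subsetP G_sub g gG)).
by rewrite (card_sm (subsetP G_sub F FG)); split=> //; apply/existsP; exists F; rewrite subxx andbT.
Qed.

Lemma fnum_sr_cx2 : fnum (sr_cx G) 2 = 'C(n, 2) - #|G|.
Proof.
rewrite -card_sm2 -[in RHS](setIidPr G_sub) -cardsD; apply: eq_card => F; rewrite !inE.
case F2: (#|F| == 2); rewrite ?andbF ?andbT //; congr negb.
apply/existsP/idP => [[g /andP[gG gF]]|FG]; last by exists F; rewrite FG subxx.
suff <- : g = F by [].
by apply/eqP; rewrite eqEcard gF (eqP F2) (card_sm (subsetP G_sub g gG)).
Qed.

Lemma f_ideal_half_binomial : 1 < n -> f_ideal G -> 2 * #|G| = 'C(n, 2).
Proof.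
move=> n_gt1 /forallP/(_ (Ordinal (n_gt1 : 2 < n.+1))) /=.
rewrite fnum_facet_cx2 fnum_sr_cx2 => /eqP eqG.
have : #|G| <= 'C(n, 2) by rewrite -card_sm2 subset_leq_card.
by rewrite {2}eqG; lia.
Qed.

Variable S : mono.
Hypothesis uncut_subG : uncut S \subset G.
Hypothesis S_gt1 : 1 < #|S|.
Hypothesis SC_gt1 : 1 < #|~: S|.

Lemma facet_cx_sr_cx_ne2 (F : mono) : #|F| != 2 -> (F \in facet_cx G) = (F \in sr_cx G).
Proof.
rewrite !inE => F_ne2; have [F_le1|F_ge3] : #|F| <= 1 \/ 3 <= #|F| by lia.
  have [x sFx] : exists x, F \subset [set x].
    have [/eqP/cards1P[x ->]|] := eqVneq #|F| 1; first by exists x.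
    have /card_gt0P[x _] : 0 < #|~: S| by lia.
    move=> F_ne1; exists x; have /eqP -> : F == set0 by rewrite -cards_eq0; lia.
    exact: sub0set.
  have [g gA xg] := uncut_covers S_gt1 SC_gt1 x.
  have -> : [exists g in G, F \subset g].
    by apply/existsP; exists g; rewrite (subsetP uncut_subG) //= (subset_trans sFx) ?sub1set.
  apply/esym/existsP => -[h /andP[hG hF]].
  by move: (subset_leq_card hF); rewrite (card_sm (subsetP G_sub h hG)); lia.
have -> : inI G F.
  have [g gA gF] := uncut_meets_large S F_ge3.
  by apply/existsP; exists g; rewrite gF (subsetP uncut_subG).
apply/existsP => -[g /andP[gG Fg]].
by move: (subset_leq_card Fg); rewrite (card_sm (subsetP G_sub g gG)); lia.
Qed.

Lemma f_ideal_uncut : f_ideal G = (2 * #|G| == 'C(n, 2)).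
Proof.
have n_gt1 : 1 < n by rewrite -(card_ord n) -(cardsC S); lia.
apply/idP/eqP => [|eqG]; first by move/(f_ideal_half_binomial n_gt1) ->.
apply/forallP=> i; have [i2|i_ne2] := eqVneq (i : nat) 2.
  by rewrite i2 fnum_facet_cx2 fnum_sr_cx2 -eqG; apply/eqP; lia.
apply/eqP/eq_card => F; have := @facet_cx_sr_cx_ne2 F; rewrite !inE => eqF.
have [Fi|] := eqVneq #|F| i; last by rewrite !andbF.
by rewrite eqF ?Fi.
Qed.

End Complexes.

Section Balanced.
Variable m : nat.
Hypothesis n_half : n = m + m \/ n = m + m + 1.
Hypothesis m_gt1 : 1 < m.

Let n_gt0 : 0 < n. Proof. by case: n_half => ->; lia. Qed.

Lemma exists_card_eq : exists S : mono, #|S| = m.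
Proof.
have : 0 < #|sm n m| by rewrite /sm card_draws card_ord bin_gt0; case: n_half => ->; lia.
by case/card_gt0P=> S; rewrite in_sm => /eqP; exists S.
Qed.

Lemma leq_half_product_bin2 : m * (n - m) <= 'C(n, 2).
Proof. by have [S hS] := exists_card_eq; rewrite -(card_uncut S) hS leq_addl. Qed.

Lemma card_compl_half_gt1 (S : mono) : #|S| = m -> 1 < #|~: S|.
Proof. by rewrite cardsC_ord => ->; case: n_half => ->; lia. Qed.

Lemma perfect_uncut_half (S : mono) : #|S| = m -> perfect 2 (uncut S).
Proof. by move=> hS; rewrite perfect_uncut ?card_compl_half_gt1 ?hS. Qed.

Lemma Nperf2E : Nperf n 2 = 'C(n, 2) - m * (n - m).
Proof.
have [S0 hS0] := exists_card_eq; have := card_uncut S0; rewrite hS0 => cardS0.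
apply/eqP; rewrite eqn_leq; apply/andP; split.
  apply: leq_trans (geq_bigminn_cond _ _ (perfect_uncut_half hS0)) _; lia.
apply: (big_ind (fun x => 'C(n, 2) - m * (n - m) <= x)) => [||A pA].
- have : #|uncut S0| <= #|powerset [set: vertex]|.
    by apply: subset_leq_card; apply/subsetP=> x _; rewrite inE subsetT.
  by rewrite card_powerset cardsT card_ord; lia.
- by move=> x y hx hy; rewrite leq_min hx hy.
- have := covering_bound (perfect_sub pA) (perfect_covers_triples pA) n_gt0 n_half; lia.
Qed.

Lemma U2_uncutE (G : {set mono}) : (G \in U2 n) = [&& G \subset sm n 2,
  2 * #|G| == 'C(n, 2) & [exists S : mono, (#|S| == m) && (uncut S \subset G)]].
Proof.
rewrite inE; apply/and3P/and3P=> -[G_sub]; last first.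
  move=> eqG /existsP[S /andP[/eqP hS sSG]]; split=> //.
    by rewrite (f_ideal_uncut G_sub sSG) ?card_compl_half_gt1 ?hS.
  apply/existsP; exists (uncut S); rewrite sSG perfect_uncut_half //= Nperf2E.
  by rewrite -(card_uncut S) hS addnK.
move=> fG /existsP[A /and3P[sAG pA /eqP cardA]].
have [|S [hS eqA]] := covering_extremal (perfect_sub pA) (perfect_covers_triples pA) n_gt0 n_half.
  have := covering_bound (perfect_sub pA) (perfect_covers_triples pA) n_gt0 n_half.
  by have := leq_half_product_bin2; rewrite cardA Nperf2E; lia.
have SC_gt1 := card_compl_half_gt1 hS; subst A.
split=> //; last by apply/existsP; exists S; rewrite hS eqxx.
by rewrite -(f_ideal_uncut G_sub sAG) ?hS.
Qed.

Section Count.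
Variable k : nat.
Hypothesis k_gt0 : 0 < k.
Hypothesis m_double : m = k + k.

Definition fill (S : mono) : {set {set mono}} :=
  [set G : {set mono} | [&& G \subset sm n 2, 2 * #|G| == 'C(n, 2) & uncut S \subset G]].

Lemma U2_fillE G : (G \in U2 n) = [exists S in sm n m, G \in fill S].
Proof.
rewrite U2_uncutE; apply/and3P/existsP => [[G_sub eqG /existsP[S /andP[hS sSG]]]|[S]].
  by exists S; rewrite !inE hS G_sub eqG sSG.
rewrite !inE => /andP[hS /and3P[G_sub eqG sSG]]; split=> //.
by apply/existsP; exists S; rewrite hS.
Qed.

Lemma card_uncut_add_half (S : mono) : #|S| = m -> 2 * (#|uncut S| + k) = 'C(n, 2).
Proof.
move=> hS; have := mul2_bin2 n; have := card_uncut S; rewrite hS m_double.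
by move: 'C(n, 2) #|uncut S| => c u; case: n_half => ->; rewrite m_double; nia.
Qed.

Lemma fillE (S : mono) : #|S| = m ->
  fill S = [set uncut S :|: X | X in [set X : {set mono} | X \subset cross S (~: S) & #|X| == k]].
Proof.
move=> hS; have half := card_uncut_add_half hS.
apply/setP=> G; apply/idP/imsetP => [|[X]].
  rewrite inE => /and3P[G_sub /eqP eqG sSG]; exists (G :\: uncut S).
    rewrite inE -sm2_diff_uncut setSD //= cardsD (setIidPr sSG).
    by apply/eqP; lia.
  by rewrite setDE setUIr setUCr setIT; apply/esym/setUidPr.
rewrite inE => /andP[sXC /eqP cardX] ->.
have dSX : [disjoint uncut S & X] := disjointWr sXC (disjoint_uncut_cross S).
rewrite inE cardsU (disjoint_setI0 dSX) cards0 subn0 cardX half eqxx subsetUl andbT.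
by rewrite subUset uncut_sub (subset_trans sXC) // -sm2_diff_uncut subsetDl.
Qed.

Lemma card_fill (S : mono) : #|S| = m -> #|fill S| = 'C(m * (n - m), k).
Proof.
move=> hS; rewrite fillE // card_in_imset => [|X1 X2]; last first.
  rewrite !inE => /andP[sX1 _] /andP[sX2 _] eqX.
  have dS (X : {set mono}) : X \subset cross S (~: S) -> (uncut S :|: X) :\: uncut S = X.
    move=> sX; rewrite setDUl setDv set0U; apply/setDidPl.
    by rewrite disjoint_sym (disjointWr sX (disjoint_uncut_cross S)).
  by rewrite -(dS _ sX1) eqX dS.
by rewrite cards_draws card_cross ?cardsC_ord ?hS // disjoints_subset setCK.
Qed.

Lemma card_quadrants_le (S T : mono) G : #|S| = m -> G \in fill S -> uncut T \subset G ->
  #|T :&: S| * #|T :\: S| + #|~: T :&: S| * #|~: T :\: S| <= k.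
Proof.
move=> hS; rewrite inE => /and3P[_ /eqP eqG sSG] sTG.
have cardX : #|G :\: uncut S| = k.
  by have := card_uncut_add_half hS; rewrite cardsD (setIidPr sSG); lia.
have quadrant_sub U : uncut U \subset G -> cross (U :&: S) (U :\: S) \subset G :\: uncut S.
  move=> sUG; apply: subset_trans (cross_quadrant_sub S U) _.
  by rewrite -sm2_diff_uncut setIDA setSD // subIset ?sUG.
have sub_side U e : e \in cross (U :&: S) (U :\: S) -> e \subset U.
  case/crossP=> x [y [+ + ->]]; rewrite !inE => /andP[xU _] /andP[_ yU].
  by rewrite subUset !sub1set xU yU.
pose Q U := cross (U :&: S) (U :\: S).
have dQ : [disjoint Q T & Q (~: T)].
  rewrite disjoints_subset; apply/subsetP=> e eQ; rewrite inE; apply/negP => /sub_side eTC.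
  have /crossP[x [y [_ _ ee]]] := eQ; have xe : x \in e by rewrite ee !inE eqxx.
  by move: (subsetP (sub_side _ _ eQ) x xe) (subsetP eTC x xe); rewrite inE => ->.
rewrite -!card_cross ?disjoint_setI_setD //.
have := cardsU (Q T) (Q (~: T)); rewrite (disjoint_setI0 dQ) cards0 subn0 /Q => <-.
by rewrite -cardX subset_leq_card // subUset !quadrant_sub ?uncutC.
Qed.

Lemma fill_overlap (S T : mono) G : #|S| = m -> #|T| = m ->
  G \in fill S -> G \in fill T -> T = S \/ T = ~: S.
Proof.
move=> hS hT GS; rewrite inE => /and3P[_ _ sTG].
have le_k := card_quadrants_le hS GS sTG.
have e1 : #|T :&: S| + #|T :\: S| = k + k by rewrite cardsID hT.
have e2 : #|T :&: S| + #|~: T :&: S| = k + k.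
  by rewrite setIC [~: T :&: S]setIC -setDE cardsID hS.
have e3 : #|~: T :&: S| + #|~: T :\: S| = k + k \/
          #|~: T :&: S| + #|~: T :\: S| = k + k + 1.
  by rewrite cardsID cardsC_ord hT -m_double; case: n_half => ->; lia.
case: (quadrant_products_small k_gt0 e1 e2 e3 le_k) => [/eqP|[/eqP TS0 /eqP TCS0]].
  rewrite cards_eq0 setD_eq0 => sTS; left; apply/eqP.
  by rewrite eqEcard sTS hS hT leqnn.
move: TS0 TCS0; rewrite !cards_eq0 setD_eq0 setI_eq0 disjoints_subset => sTSC sTCS.
by right; apply/eqP; rewrite eqEsubset sTSC -setCS setCK.
Qed.

Lemma card_U2_mul c : (forall G, G \in U2 n -> #|[set S in sm n m | G \in fill S]| = c) ->
  #|U2 n| * c = 'C(n, m) * 'C(m * (n - m), k).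
Proof.
move=> hc; have <- : \sum_(S in sm n m) #|fill S| = 'C(n, m) * 'C(m * (n - m), k).
  rewrite (eq_bigr (fun _ => 'C(m * (n - m), k))) => [|S]; last by rewrite in_sm => /eqP /card_fill.
  by rewrite sum_nat_const /sm card_draws card_ord mulnC.
under eq_bigr => S _ do rewrite card_sum_mem.
rewrite exchange_big /= (eq_bigr (fun G => if G \in U2 n then c else 0)) => [|G _].
  by rewrite -big_mkcond /= sum_nat_const.
rewrite -card_set_sum; case: ifPn => [/hc //|]; rewrite U2_fillE.
move=> /existsPn nG; apply/eqP; rewrite cards_eq0; apply/eqP/setP=> S.
by rewrite in_set0; apply/negbTE; rewrite in_set; exact: nG.
Qed.

Lemma fillC (S : mono) : fill (~: S) = fill S.
Proof. by apply/setP=> G; rewrite !inE uncutC. Qed.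

Lemma card_U2_even : n = m + m -> #|U2 n| * 2 = 'C(n, m) * 'C(m * (n - m), k).
Proof.
move=> n_even; apply: card_U2_mul => G; rewrite U2_fillE => /existsP[S0 /andP[]].
rewrite in_sm => /eqP hS0 GS0; have hC : #|~: S0| = m by rewrite cardsC_ord hS0 n_even addnK.
have -> : [set S in sm n m | G \in fill S] = [set S0; ~: S0].
  apply/setP=> S; rewrite in_set in_set2 in_sm; apply/andP/orP => [[/eqP hS GS]|].
    by case: (fill_overlap hS0 hS GS0 GS) => ->; [left | right].
  by case=> /eqP ->; rewrite ?fillC ?hS0 ?hC.
rewrite cards2; case: eqVneq => // eqS0.
by have := congr1 (fun A : mono => Ordinal n_gt0 \in A) eqS0; rewrite /= inE; case: (_ \in S0).
Qed.

Lemma card_U2_odd : n = m + m + 1 -> #|U2 n| = 'C(n, m) * 'C(m * (n - m), k).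
Proof.
move=> n_odd; rewrite -[#|U2 n|]muln1; apply: card_U2_mul => G.
rewrite U2_fillE => /existsP[S0 /andP[]].
rewrite in_sm => /eqP hS0 GS0; have hC : #|~: S0| = m + 1 by rewrite cardsC_ord hS0 n_odd; lia.
have -> : [set S in sm n m | G \in fill S] = [set S0].
  apply/setP=> S; rewrite in_set in_set1 in_sm; apply/andP/eqP => [[/eqP hS GS]|->].
    by case: (fill_overlap hS0 hS GS0 GS) => // eS; move: hS; rewrite eS hC; lia.
  by rewrite hS0.
by rewrite cards1.
Qed.

End Count.

End Balanced.

Lemma U2_half_binomial G : 1 < n -> G \in U2 n -> 2 * #|G| = 'C(n, 2).
Proof. by move=> n_gt1; rewrite inE => /and3P[G_sub fG _]; exact: f_ideal_half_binomial. Qed.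

End SquareFree.

Lemma card_U2_4k k : 0 < k -> 2 * #|U2 (4 * k)| = 'C(4 * k, 2 * k) * 'C(4 * k ^ 2, k).
Proof.
move=> k_gt0; have n_even : 4 * k = (k + k) + (k + k) by lia.
have m_gt1 : 1 < k + k by lia.
rewrite mulnC (card_U2_even (or_introl n_even) m_gt1 k_gt0 erefl n_even).
by congr (_ * _); congr 'C(_, _); lia.
Qed.

Lemma card_U2_4k1 k : 0 < k ->
  #|U2 (4 * k + 1)| = 'C(4 * k + 1, 2 * k) * 'C(4 * k ^ 2 + 2 * k, k).
Proof.
move=> k_gt0; have n_odd : 4 * k + 1 = (k + k) + (k + k) + 1 by lia.
have m_gt1 : 1 < k + k by lia.
rewrite (card_U2_odd (or_intror n_odd) m_gt1 k_gt0 erefl n_odd).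
by congr (_ * _); congr 'C(_, _); lia.
Qed.

Theorem proposition4p1 (n : nat) (hn : 4 <= n) :
  (forall k : nat, 0 < k -> n = 4 * k ->
     2 * #|U2 n| = 'C(4 * k, 2 * k) * 'C(4 * k ^ 2, k)) /\
  (forall k : nat, 0 < k -> n = 4 * k + 1 ->
     #|U2 n| = 'C(4 * k + 1, 2 * k) * 'C(4 * k ^ 2 + 2 * k, k)) /\
  ((forall k : nat, 0 < k -> n <> 4 * k /\ n <> 4 * k + 1) -> #|U2 n| = 0).
Proof.
split; [|split] => [k k_gt0 -> | k k_gt0 -> | not_01 ]; first exact: card_U2_4k.
  exact: card_U2_4k1.
apply/eqP; rewrite cards_eq0; apply/eqP/setP=> G; rewrite in_set0.
apply/negP=> /(U2_half_binomial (leq_trans (isT : 1 < 4) hn)) /half_bin2_mod4.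
have [] := not_01 (n %/ 4); first by rewrite divn_gt0.
have := divn_eq n 4; lia.
Qed.
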